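(* Fix $\epsilon>0$ and an integer $L\geq 2$ with $2\epsilon<1/L$. (1) If $L=2$, then $\log\frac{1}{\epsilon}\leq N^*(\epsilon,1/L,L)\leq \log\frac{1}{\epsilon}+4$. (2) If $L\geq 3$, then $\log\frac{1}{L\epsilon}+2L-4\leq N^*(\epsilon,1/L,L)\leq \log\frac{1}{L\epsilon}+2L$.
   Context: Private sequential learning model. An unknown true value $v^*\in[0,1)$. A learner submits queries $q_k\in[0,1)$ and receives responses $r_k=\mathbb{I}(v^*\geq q_k)$. A learner strategy $\phi$ of length $N$ uses a random seed $Y$ uniformly distributed on $\{1,2,\dots,\mathcal{Y}\}$ and consists of query functions and an estimation function: $q_1=\phi_1(Y)$, $q_k=\phi_k(r_1,\dots,r_{k-1},Y)$, and estimate $\hat x=\phi^E(r_1,\dots,r_N,Y)\in[0,1)$; queries within a run are distinct. $\Phi_N$ is the set of such strategies of length $N$; $\hat x(x,y)$ is the estimate when $v^*=x,Y=y$. $\mathcal{Q}(x)$ is the set of query sequences $\overline q\in[0,1)^N$ having positive probability (over $Y$) when $v^*=x$; the information set is $\mathcal{I}(\overline q)=\{x\in[0,1):\overline q\in\mathcal{Q}(x)\}$. The $\delta$-cover number $C_\delta(\mathcal{E})$ of a set $\mathcal{E}\subset\mathbb{R}$ is the least number of closed intervals of length at most $\delta$ whose union contains $\mathcal{E}$. A strategy is $(\epsilon,\delta,L)$-private if $\mathbb{P}(|\hat x(x,Y)-x|\leq\epsilon/2)=1$ for all $x\in[0,1)$ and $C_\delta(\mathcal{I}(\overline q))\geq L$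 for all $x\in[0,1)$ and all $\overline q\in\mathcal{Q}(x)$. $N^*(\epsilon,\delta,L)$ is the minimal $N$ such that $\Phi_N$ contains an $(\epsilon,\delta,L)$-private strategy. Logarithms are base 2 and non-integer quantities are rounded up to the nearest integer. *)

From Stdlib Require Import Reals List ZArith Lia Lra.
Import ListNotations.
Open Scope R_scope.

Definition log2 (x : R) : R := ln x / ln 2.
(* up x is the integer with x < up x <= x + 1, so 1 - up (-x) = ceiling of x. *)
Definition Rceil (x : R) : Z := (1 - up (- x))%Z.

Definition resp (x q : R) : bool := if Rle_dec q x then true else false.

(** A learner strategy: a number of seeds [nseed] (Y uniform on {1..nseed}),
    query functions [query rs y] giving the next query after responses [rs]
    (the k-th query is [query [r_1;..;r_{k-1}] y]) and an estimation function
    [estimate [r_1;..;r_N] y]. *)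
Record strategy := Strategy {
  nseed : nat;
  query : list bool -> nat -> R;
  estimate : list bool -> nat -> R }.

Fixpoint responses (s : strategy) (x : R) (y : nat) (n : nat) : list bool :=
  match n with
  | O => []
  | S n' => let rs := responses s x y n' in rs ++ [resp x (query s rs y)]
  end.

Definition queries (s : strategy) (N : nat) (x : R) (y : nat) : list R :=
  map (fun k => query s (responses s x y k) y) (seq 0 N).

Definition xhat (s : strategy) (N : nat) (x : R) (y : nat) : R :=
  estimate s (responses s x y N) y.

Definition unif_prob (Yn : nat) (P : nat -> bool) : R :=
  INR (length (filter P (seq 1 Yn))) / INR Yn.

Definition in_PhiN (N : nat) (s : strategy) : Prop :=
  (1 <= nseed s)%nat /\
  (forall rs y, 0 <= query s rs y < 1) /\
  (forall rs y, 0 <= estimate s rs y < 1) /\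
  (forall x y, 0 <= x < 1 -> (1 <= y <= nseed s)%nat -> NoDup (queries s N x y)).

Definition Qset (s : strategy) (N : nat) (x : R) (qs : list R) : Prop :=
  unif_prob (nseed s)
    (fun y => if list_eq_dec Req_EM_T (queries s N x y) qs then true else false) > 0.

Definition info_set (s : strategy) (N : nat) (qs : list R) (x : R) : Prop :=
  0 <= x < 1 /\ Qset s N x qs.

Definition coverable (delta : R) (E : R -> Prop) (k : nat) : Prop :=
  exists I : list (R * R), length I = k /\
    (forall ab, In ab I -> fst ab <= snd ab /\ snd ab - fst ab <= delta) /\
    (forall x, E x -> exists ab, In ab I /\ fst ab <= x <= snd ab).

(** C_delta(E) >= L  (the least number of such intervals is at least L). *)
Definition cover_ge (delta : R) (E : R -> Prop) (L : nat) : Prop :=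
  forall k, coverable delta E k -> (L <= k)%nat.

Definition is_private (eps delta : R) (L : nat) (N : nat) (s : strategy) : Prop :=
  (forall x, 0 <= x < 1 ->
     unif_prob (nseed s)
       (fun y => if Rle_dec (Rabs (xhat s N x y - x)) (eps / 2) then true else false) = 1) /\
  (forall x qs, 0 <= x < 1 -> Qset s N x qs -> cover_ge delta (info_set s N qs) L).

Definition has_private (eps delta : R) (L N : nat) : Prop :=
  exists s, in_PhiN N s /\ is_private eps delta L N s.

Definition is_Nstar (eps delta : R) (L n : nat) : Prop :=
  has_private eps delta L n /\ (forall m, has_private eps delta L m -> (n <= m)%nat).

(* Fix a seed.  A value [x < r] answers "no" to every query
   [>= r], so its run is determined by its answers to the queries below [r];
   if at least [W] queries are [>= r], the estimate takes at most [2 ^ (N - W)]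
   values on [[0, r)], and accuracy forces [r <= 2 ^ (N - W) * eps].  With
   [r = 1] this is [N >= log (1 / eps)].  For privacy take [r = 1 / L]: the [c]
   queries above [r] cut [[r, 1)] into [c + 1] cells, all points of a cell get
   the same estimate, so a cell meeting the information set has width at most
   [eps].  Grouping the cells in pairs covers the information set above [r] by
   [(c + 2) / 2] intervals of width [2 eps <= 1 / L]; with [[0, r]] this must be
   at least [L] intervals, so [c >= 2 L - 4] and
   [N >= log (1 / (L eps)) + 2 L - 4].

   The [L - 1] grid points [j / L] and the [L] anchors
   [k / L + eps] locate [v] in a cell of width at most [1 / L].  A wide cell is
   bisected [T = log (1 / (L eps))] times.  A narrow cell (v less than [eps]
   above some [k / L]) needs nothing more, and the strategy spends its [T]
   queries bisecting a decoy [j / M] drawn from the seed; this makes every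
   query sequence also a run of the [L] points [k (1 + eps / 2) / L], one in
   each narrow cell and pairwise more than [1 / L] apart. *)

From Stdlib Require Import Reals ZArith List Lia Lra Classical.
Import ListNotations.
Open Scope R_scope.

Lemma Rceil_ge x : x <= IZR (Rceil x).
Proof.
  unfold Rceil. destruct (archimed (- x)) as [H1 H2].
  rewrite minus_IZR. lra.
Qed.

Lemma Rceil_le x n : x <= IZR n -> (Rceil x <= n)%Z.
Proof.
  intro H. unfold Rceil. destruct (archimed (- x)) as [H1 _].
  assert (Hup : - IZR n < IZR (up (- x))) by lra.
  rewrite <- opp_IZR in Hup. apply lt_IZR in Hup. lia.
Qed.

Lemma Rceil_le_compat x y : x <= y -> (Rceil x <= Rceil y)%Z.
Proof. intro H. apply Rceil_le. pose proof (Rceil_ge y). lra. Qed.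

Lemma ln2_pos : 0 < ln 2.
Proof. pose proof ln_lt_2. lra. Qed.

Lemma log2_lt_compat x y : 0 < x -> x < y -> log2 x < log2 y.
Proof.
  intros Hx Hxy. unfold log2, Rdiv. pose proof ln2_pos.
  apply Rmult_lt_compat_r; [apply Rinv_0_lt_compat; lra|]. apply ln_increasing; lra.
Qed.

Lemma log2_le_compat x y : 0 < x -> x <= y -> log2 x <= log2 y.
Proof.
  intros Hx [Hxy|<-]; [left; apply log2_lt_compat|right]; auto.
Qed.

Lemma log2_pow2 n : log2 (2 ^ n) = INR n.
Proof. unfold log2. rewrite ln_pow by lra. field. pose proof ln2_pos. lra. Qed.

Lemma Rceil_log2_le y n : 0 < y -> y <= 2 ^ n -> (Rceil (log2 y) <= Z.of_nat n)%Z.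
Proof.
  intros Hy Hn. apply Rceil_le. rewrite <- INR_IZR_INZ, <- log2_pow2.
  apply log2_le_compat; auto.
Qed.

Lemma Rceil_log2_spec y : 1 < y ->
  (0 <= Rceil (log2 y))%Z /\ y <= 2 ^ Z.to_nat (Rceil (log2 y)).
Proof.
  intros Hy.
  assert (Hpos : (0 <= Rceil (log2 y))%Z).
  { apply le_IZR. pose proof (Rceil_ge (log2 y)).
    pose proof (log2_lt_compat 1 y ltac:(lra) Hy) as Hlog.
    rewrite <- (pow_O 2), log2_pow2 in Hlog. simpl in Hlog. lra. }
  split; auto. destruct (Rle_lt_dec y (2 ^ Z.to_nat (Rceil (log2 y)))) as [|Hlt]; auto.
  apply log2_lt_compat in Hlt; [|apply pow_lt; lra].
  rewrite log2_pow2, INR_IZR_INZ, Z2Nat.id in Hlt by auto.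
  pose proof (Rceil_ge (log2 y)). lra.
Qed.

Lemma Rceil_log2_ratio_le a eps n : 0 < a -> 0 < eps -> a <= 2 ^ n * eps ->
  (Rceil (log2 (a / eps)) <= Z.of_nat n)%Z.
Proof.
  intros Ha Heps Hn. apply Rceil_log2_le; [apply Rdiv_lt_0_compat; auto|].
  apply (Rmult_le_reg_r eps); auto. unfold Rdiv. rewrite Rmult_assoc, Rinv_l; lra.
Qed.

Lemma Rceil_log2_ratio_spec a eps : 0 < eps -> eps < a ->
  (0 <= Rceil (log2 (a / eps)))%Z /\ a <= 2 ^ Z.to_nat (Rceil (log2 (a / eps))) * eps.
Proof.
  intros Heps Ha. destruct (Rceil_log2_spec (a / eps)) as [Hc Hpow].
  - apply (Rmult_lt_reg_r eps); auto. unfold Rdiv. rewrite Rmult_assoc, Rinv_l; lra.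
  - split; auto. apply (Rmult_le_compat_r eps) in Hpow; [|lra].
    unfold Rdiv in Hpow. rewrite Rmult_assoc, Rinv_l in Hpow; lra.
Qed.

Lemma Rdiv_le_0_compat a b : 0 <= a -> 0 < b -> 0 <= a / b.
Proof. intros. apply Rmult_le_pos; [|left; apply Rinv_0_lt_compat]; auto. Qed.

Lemma Rdiv_le_compat_r a b c : 0 < c -> a <= b -> a / c <= b / c.
Proof. intros. apply Rmult_le_compat_r; [left; apply Rinv_0_lt_compat|]; auto. Qed.

Lemma Rdiv_lt_compat_r a b c : 0 < c -> a < b -> a / c < b / c.
Proof. intros. apply Rmult_lt_compat_r; [apply Rinv_0_lt_compat|]; auto. Qed.

Lemma INR_succ_le i j : (i < j)%nat -> INR i + 1 <= INR j.
Proof. intros H. rewrite <- S_INR. apply le_INR. lia. Qed.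

Lemma nat_floor_ex n x : 0 <= x < INR n -> exists j, (j < n)%nat /\ INR j <= x < INR j + 1.
Proof.
  induction n as [|n IH]; intros Hx; [simpl in Hx; lra|].
  rewrite S_INR in Hx. destruct (Rlt_le_dec x (INR n)).
  - destruct IH as [j [Hj Hxj]]; [lra|]. exists j. split; auto.
  - exists n. split; [lia|lra].
Qed.

Lemma grid_point (M : nat) a b : (0 < M)%nat -> 0 <= a -> b <= 1 -> 1 / INR M < b - a ->
  exists j, (j < M)%nat /\ a <= INR j / INR M < b.
Proof.
  intros HM Ha Hb Hd. apply lt_0_INR in HM.
  assert (0 < 1 / INR M) by (apply Rdiv_lt_0_compat; lra).
  destruct (nat_floor_ex M (a * INR M)) as [j [Hj Haj]]; [split; nra|].
  assert (Hj1 : 0 < INR (S j) / INR M - a <= 1 / INR M).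
  { replace (INR (S j) / INR M - a) with ((INR j + 1 - a * INR M) / INR M)
      by (rewrite S_INR; field; lra).
    split; [apply Rdiv_lt_0_compat|apply Rdiv_le_compat_r]; lra. }
  exists (S j). split; [|lra].
  apply INR_lt. apply (Rmult_lt_reg_r (/ INR M)); [apply Rinv_0_lt_compat; auto|].
  rewrite Rinv_r by lra. unfold Rdiv in Hj1. lra.
Qed.

Lemma Rabs_le_inv a b : Rabs a <= b -> - b <= a <= b.
Proof. unfold Rabs; destruct Rcase_abs; lra. Qed.

Lemma least_nat (P : nat -> Prop) :
  (exists n, P n) -> exists n, P n /\ forall m, P m -> (n <= m)%nat.
Proof.
  intros [n Hn]. induction n as [n IH] using lt_wf_ind.
  destruct (classic (exists m, (m < n)%nat /\ P m)) as [[m [Hmn Hm]]|Hnone].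
  - exact (IH m Hmn Hm).
  - exists n. split; auto. intros m Hm. apply Nat.nlt_ge. intro Hmn. eauto.
Qed.

Lemma list_Rmax_ex (l : list R) :
  l <> [] -> exists m, In m l /\ forall a, In a l -> a <= m.
Proof.
  induction l as [|a l IH]; intros Hl; [congruence|].
  destruct l as [|b l'].
  - exists a. split; [left; auto|]. intros c [->|[]]; lra.
  - destruct IH as [m [Hm Hmax]]; [discriminate|].
    exists (Rmax a m). split.
    + apply Rmax_case; [left|right]; auto.
    + intros c [->|Hc]; [apply Rmax_l|]. eapply Rle_trans; [apply Hmax, Hc|apply Rmax_r].
Qed.

Lemma firstn_app_length {A} (F G : list A) : firstn (length F) (F ++ G) = F.
Proof. rewrite firstn_app, Nat.sub_diag, firstn_all. apply app_nil_r. Qed.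

Lemma skipn_app_length {A} (F G : list A) : skipn (length F) (F ++ G) = G.
Proof. rewrite skipn_app, skipn_all, Nat.sub_diag. reflexivity. Qed.

Lemma firstn_app_ge {A} (F G : list A) k :
  (length F <= k)%nat -> firstn k (F ++ G) = F ++ firstn (k - length F) G.
Proof. intros. rewrite firstn_app, firstn_all2 by lia. reflexivity. Qed.

Lemma firstn_succ_snoc {A} (l : list A) k d :
  (k < length l)%nat -> firstn (S k) l = firstn k l ++ [nth k l d].
Proof.
  revert k. induction l as [|a l IH]; intros [|k] Hk; simpl in *; try lia; auto.
  rewrite (IH k) by lia. reflexivity.
Qed.

Lemma map_seq_nth {A} (f : nat -> A) (l : list A) d :
  (forall k, (k < length l)%nat -> f k = nth k l d) -> map f (seq 0 (length l)) = l.
Proof.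
  intros H. apply nth_ext with (d := f 0%nat) (d' := d); rewrite length_map, length_seq; auto.
  intros n Hn. rewrite map_nth, seq_nth by auto. auto.
Qed.

(** * Runs of a strategy *)

Lemma unif_prob_pos_iff n P :
  unif_prob n P > 0 <-> exists y, In y (seq 1 n) /\ P y = true.
Proof.
  unfold unif_prob. split.
  - destruct (filter P (seq 1 n)) as [|y l] eqn:E.
    + simpl. unfold Rdiv. rewrite Rmult_0_l. lra.
    + intros _. exists y. apply filter_In. rewrite E. left; auto.
  - intros [y [Hy HP]].
    assert (Hin : In y (filter P (seq 1 n))) by (apply filter_In; auto).
    apply in_seq in Hy.
    destruct (filter P (seq 1 n)) as [|a l]; [destruct Hin|].
    apply Rdiv_lt_0_compat; apply lt_0_INR; simpl; lia.
Qed.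

Lemma unif_prob_eq1_iff n P : (1 <= n)%nat ->
  unif_prob n P = 1 <-> forall y, In y (seq 1 n) -> P y = true.
Proof.
  intros Hn. unfold unif_prob.
  assert (HnR : INR n <> 0) by (apply not_0_INR; lia).
  split.
  - intros H. apply forallb_forall. apply filter_length_forallb.
    rewrite length_seq. apply INR_eq.
    apply (Rmult_eq_reg_r (/ INR n)); [|apply Rinv_neq_0_compat; auto].
    unfold Rdiv in H. rewrite H, Rinv_r; auto.
  - intros H. rewrite forallb_filter_id by (apply forallb_forall; auto).
    rewrite length_seq. apply Rdiv_diag; auto.
Qed.

Lemma resp_true x q : q <= x -> resp x q = true.
Proof. intro. unfold resp. destruct Rle_dec; auto; lra. Qed.

Lemma resp_false x q : x < q -> resp x q = false.
Proof. intro. unfold resp. destruct Rle_dec; auto; lra. Qed.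

Lemma length_queries s N x y : length (queries s N x y) = N.
Proof. unfold queries. rewrite length_map, length_seq. auto. Qed.

Lemma Qset_iff s N x qs :
  Qset s N x qs <-> exists y, In y (seq 1 (nseed s)) /\ queries s N x y = qs.
Proof.
  unfold Qset. rewrite unif_prob_pos_iff.
  split; intros [y [Hy Hq]]; exists y; split; auto;
    destruct list_eq_dec; auto; discriminate.
Qed.

Lemma private_accurate s N eps delta L x y :
  in_PhiN N s -> is_private eps delta L N s -> 0 <= x < 1 -> In y (seq 1 (nseed s)) ->
  Rabs (xhat s N x y - x) <= eps / 2.
Proof.
  intros [Hn _] [Hacc _] Hx Hy.
  pose proof (proj1 (unif_prob_eq1_iff _ _ Hn) (Hacc x Hx) y Hy) as H; cbv beta in H.
  destruct Rle_dec in H; auto. discriminate.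
Qed.

Lemma xhat_ext s N y z z' :
  (forall p, In p (queries s N z y) -> resp z' p = resp z p) ->
  xhat s N z' y = xhat s N z y.
Proof.
  intros Hq. unfold xhat. f_equal.
  assert (Hk : forall k, (k <= N)%nat -> responses s z' y k = responses s z y k).
  { induction k as [|k IH]; intros Hk; simpl; auto.
    rewrite IH by lia. do 2 f_equal. apply Hq. unfold queries.
    apply in_map_iff. exists k. split; auto. apply in_seq. lia. }
  apply Hk. lia.
Qed.

(** * Covers by short intervals *)

Lemma coverable_interval delta (A : R -> Prop) a b :
  a <= b -> b - a <= delta -> (forall x, A x -> a <= x <= b) -> coverable delta A 1.
Proof.
  intros Hab Hd HA. exists [(a, b)]. split; [reflexivity|]. split.
  - intros ab [<-|[]]. simpl. auto.
  - intros x Hx. exists (a, b). simpl. auto.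
Qed.

Lemma coverable_subset delta (A B : R -> Prop) k :
  (forall x, A x -> B x) -> coverable delta B k -> coverable delta A k.
Proof. intros HAB [I [Hk [HI Hcov]]]. exists I. auto. Qed.

Lemma coverable_union delta (A B : R -> Prop) k m :
  coverable delta A k -> coverable delta B m -> coverable delta (fun x => A x \/ B x) (k + m).
Proof.
  intros [I [Hk [HI HcovI]]] [J [Hm [HJ HcovJ]]]. exists (I ++ J).
  split; [rewrite length_app; auto|]. split.
  - intros ab Hab. apply in_app_or in Hab as [Hab|Hab]; auto.
  - intros x [Hx|Hx];
      [destruct (HcovI x Hx) as [ab [Hab Hxab]]|destruct (HcovJ x Hx) as [ab [Hab Hxab]]];
      exists ab; split; auto; apply in_or_app; auto.
Qed.

Lemma coverable_le delta delta' (A : R -> Prop) k :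
  delta <= delta' -> coverable delta A k -> coverable delta' A k.
Proof.
  intros Hd [I [Hk [HI Hcov]]]. exists I. split; auto. split; auto.
  intros ab Hab. specialize (HI ab Hab). lra.
Qed.

(* Removing the interval with the largest left end [m] leaves a cover of [[0, min t m)]. *)
Lemma interval_cover_bound eps (l : list R) t : 0 < eps ->
  (forall x, 0 <= x < t -> exists a, In a l /\ a <= x <= a + eps) ->
  t <= INR (length l) * eps.
Proof.
  intros Heps. remember (length l) as n eqn:En. revert l t En.
  induction n as [n IH] using lt_wf_ind. intros l t En Hcov.
  destruct (Rle_lt_dec t 0) as [Ht|Ht]; [pose proof (pos_INR n); nra|].
  destruct l as [|a0 l0]; [destruct (Hcov 0) as [a [[] _]]; lra|].
  destruct (list_Rmax_ex (a0 :: l0)) as [m [Hm Hmax]]; [discriminate|].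
  destruct (in_split _ _ Hm) as [l1 [l2 El]]. rewrite El in En, Hmax, Hcov.
  rewrite length_app in En. simpl in En.
  assert (Hlow : Rmin t m <= INR (length (l1 ++ l2)) * eps).
  { apply (IH (length (l1 ++ l2))) with (l := l1 ++ l2); auto; [rewrite length_app; lia|].
    intros x Hx. destruct (Hcov x) as [a [Ha Hxa]]; [pose proof (Rmin_l t m); lra|].
    exists a. split; auto. apply in_elt_inv in Ha as [->|Ha]; auto.
    pose proof (Rmin_r t m). lra. }
  assert (Htop : t <= Rmin t m + eps).
  { destruct (Rle_lt_dec t m); [rewrite Rmin_left; lra|]. rewrite Rmin_right by lra.
    destruct (Rle_lt_dec t (m + eps)) as [|Hgt]; auto.
    assert (Hm0 : 0 <= m + eps)
      by (destruct (Hcov 0) as [a [Ha Hxa]]; [|specialize (Hmax a Ha)]; lra).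
    destruct (Hcov ((m + eps + t) / 2)) as [a [Ha Hxa]]; [|specialize (Hmax a Ha)]; lra. }
  rewrite length_app in Hlow. replace (INR n) with (INR (length l1 + length l2) + 1)
    by (rewrite En, Nat.add_succ_r, S_INR; reflexivity).
  lra.
Qed.

(* An interval of length at most [delta] contains at most one of the points. *)
Lemma separated_cover_ge delta (E : R -> Prop) (z : nat -> R) n :
  (forall i j, i <> j -> delta < Rabs (z i - z j)) ->
  (forall i, (i < n)%nat -> E (z i)) -> cover_ge delta E n.
Proof.
  intros Hsep HE k [I [<- [HI Hcov]]].
  assert (Hpts : forall i, (i < n)%nat -> exists ab, In ab I /\ fst ab <= z i <= snd ab)
    by eauto.
  clear HE Hcov. revert I HI Hpts. induction n as [|n IH]; intros I HI Hpts; [lia|].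
  destruct (Hpts n ltac:(lia)) as [ab [Hab Hzn]].
  destruct (in_split _ _ Hab) as [I1 [I2 ->]].
  enough (n <= length (I1 ++ I2))%nat by (rewrite length_app in *; simpl; lia).
  apply IH.
  - intros ab' H'. apply HI. apply in_app_or in H' as [H'|H']; apply in_or_app;
      [left|right; right]; auto.
  - intros i Hi. destruct (Hpts i ltac:(lia)) as [ab' [Hab' Hzi]].
    apply in_elt_inv in Hab' as [->|Hab']; eauto.
    specialize (Hsep i n ltac:(lia)). specialize (HI ab Hab).
    unfold Rabs in Hsep. destruct Rcase_abs; lra.
Qed.

(** * Counting answers below a threshold *)

Fixpoint bitstrings (n : nat) : list (list bool) :=
  match n with
  | O => [[]]
  | S n' => map (cons true) (bitstrings n') ++ map (cons false) (bitstrings n')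
  end.

Lemma length_bitstrings n : length (bitstrings n) = (2 ^ n)%nat.
Proof. induction n; simpl; auto. rewrite length_app, !length_map. lia. Qed.

Lemma in_bitstrings n c : length c = n -> In c (bitstrings n).
Proof.
  revert c. induction n as [|n IH]; intros [|b c] Hc; try discriminate; simpl; auto.
  apply in_or_app. destruct b; [left|right]; apply in_map, IH; auto.
Qed.

Definition count_ge (r : R) (l : list R) : nat :=
  length (filter (fun q => if Rle_dec r q then true else false) l).

Section Replay.

Variables (s : strategy) (y : nat) (r : R).

Fixpoint replay (n : nat) (rs c : list bool) : list bool :=
  match n with
  | O => rs
  | S n' =>
    if Rle_dec r (query s rs y) then replay n' (rs ++ [false]) c
    else match c with
         | [] => replay n' (rs ++ [false]) []
         | b :: c' => replay n' (rs ++ [b]) c'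
         end
  end.

Fixpoint low_answers (x : R) (k n : nat) : list bool :=
  match n with
  | O => []
  | S n' =>
    let q := query s (responses s x y k) y in
    if Rle_dec r q then low_answers x (S k) n' else resp x q :: low_answers x (S k) n'
  end.

Lemma replay_low_answers x : x < r -> forall n k c,
  replay n (responses s x y k) (low_answers x k n ++ c) = responses s x y (k + n).
Proof.
  intros Hx n. induction n as [|n IH]; intros k c; simpl.
  - rewrite Nat.add_0_r. auto.
  - change (responses s x y k ++ [resp x (query s (responses s x y k) y)])
      with (responses s x y (S k)).
    rewrite <- Nat.add_succ_comm, <- (IH (S k) c).
    destruct Rle_dec as [Hq|Hq]; simpl; auto.
    rewrite resp_false by lra. reflexivity.
Qed.

Lemma length_low_answers x n k :
  (length (low_answers x k n)
   + count_ge r (map (fun j => query s (responses s x y j) y) (seq k n)) = n)%nat.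
Proof.
  revert k. induction n as [|n IH]; intros k; simpl; auto.
  unfold count_ge in *. simpl. specialize (IH (S k)).
  destruct Rle_dec; simpl; lia.
Qed.

End Replay.

(* The estimate of a value [x < r] is determined by the at most [N - W]
   answers to queries below [r], so [2 ^ (N - W)] intervals of length [eps]
   cover [[0, r)]. *)
Lemma low_queries_bound s N y r W eps : 0 < eps ->
  (forall x, 0 <= x < r -> Rabs (xhat s N x y - x) <= eps / 2) ->
  (forall x, 0 <= x < r -> (W <= count_ge r (queries s N x y))%nat) ->
  r <= 2 ^ (N - W) * eps.
Proof.
  intros Heps Hacc Hcnt.
  set (lefts := map (fun c => estimate s (replay s y r N [] c) y - eps / 2)
                    (bitstrings (N - W))).
  replace (2 ^ (N - W)) with (INR (length lefts))
    by (unfold lefts; rewrite length_map, length_bitstrings, pow_INR; reflexivity).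
  apply interval_cover_bound; auto.
  intros x Hx.
  set (c := low_answers s y r x 0 N).
  pose proof (length_low_answers s y r x N 0) as Hc. fold c in Hc.
  specialize (Hcnt x Hx). unfold queries in Hcnt.
  exists (estimate s (replay s y r N [] (c ++ repeat false (N - W - length c))) y - eps / 2).
  split.
  - apply in_map_iff. eexists; split; [reflexivity|].
    apply in_bitstrings. rewrite length_app, repeat_length. lia.
  - change (@nil bool) with (responses s x y 0).
    rewrite (replay_low_answers s y r x ltac:(lra) N 0).
    specialize (Hacc x Hx). apply Rabs_le_inv in Hacc. unfold xhat in Hacc. simpl. lra.
Qed.

Lemma has_private_pow_bound eps delta L N : 0 < eps ->
  has_private eps delta L N -> 1 <= 2 ^ N * eps.
Proof.
  intros Heps [s [HPhi Hpriv]].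
  rewrite <- (Nat.sub_0_r N). apply (low_queries_bound s N 1 1 0 eps Heps).
  - intros x Hx. apply (private_accurate s N eps delta L); auto.
    apply in_seq. destruct HPhi. lia.
  - intros; lia.
Qed.

(** * Cells cut out by the queries *)

Definition gap (P : list R) (lo hi : R) : Prop := forall p, In p P -> ~ (lo < p < hi).

Definition in_open (lo hi p : R) : bool :=
  if Rlt_dec lo p then if Rlt_dec p hi then true else false else false.

Definition count_between (lo hi : R) (P : list R) : nat := length (filter (in_open lo hi) P).

Lemma in_open_spec lo hi p : in_open lo hi p = true <-> lo < p < hi.
Proof.
  unfold in_open. destruct (Rlt_dec lo p), (Rlt_dec p hi); split; intros; auto;
    try discriminate; lra.
Qed.

Lemma gap_empty P lo hi : hi <= lo -> gap P lo hi.
Proof. intros H p _ Hp. lra. Qed.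

Lemma count_between_eq0 lo hi P : count_between lo hi P = 0%nat -> gap P lo hi.
Proof.
  unfold count_between. intros H p Hp Hin.
  assert (Hf : In p (filter (in_open lo hi) P))
    by (apply filter_In; rewrite in_open_spec; auto).
  destruct (filter (in_open lo hi) P); [destruct Hf|discriminate].
Qed.

Lemma count_between_top lo hi P : count_between lo hi P <> 0%nat ->
  exists g, In g P /\ lo < g < hi /\ gap P g hi.
Proof.
  unfold count_between. intros H.
  destruct (list_Rmax_ex (filter (in_open lo hi) P)) as [g [Hg Hmax]].
  { intro E. rewrite E in H. auto. }
  apply filter_In in Hg as [Hg Hglohi]. apply in_open_spec in Hglohi.
  exists g. repeat split; auto; try lra. intros p Hp Hpg.
  assert (p <= g) by (apply Hmax, filter_In; rewrite in_open_spec; split; auto; lra).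
  lra.
Qed.

Lemma count_between_lt lo g hi P : In g P -> lo < g < hi ->
  (count_between lo g P < count_between lo hi P)%nat.
Proof.
  intros Hg Hglohi. unfold count_between. induction P as [|a P IH]; [destruct Hg|]. simpl.
  assert (Hmono : forall b, in_open lo g b = true -> in_open lo hi b = true)
    by (intros b; rewrite !in_open_spec; lra).
  destruct Hg as [->|Hg].
  - assert (Hfalse : in_open lo g g = false)
      by (destruct (in_open lo g g) eqn:E; auto; apply in_open_spec in E; lra).
    assert (Htrue : in_open lo hi g = true) by (apply in_open_spec; lra).
    rewrite Hfalse, Htrue. simpl.
    apply Nat.lt_succ_r. clear IH. induction P as [|b P IHP]; simpl; auto.
    destruct (in_open lo g b) eqn:E; [rewrite (Hmono b E)|destruct (in_open lo hi b)];
      simpl; lia.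
  - specialize (IH Hg). destruct (in_open lo g a) eqn:E;
      [rewrite (Hmono a E)|destruct (in_open lo hi a)]; simpl; lia.
Qed.

Lemma count_between_le_count_ge r t q : (count_between r t q <= count_ge r q)%nat.
Proof.
  unfold count_between, count_ge. induction q as [|a q IH]; simpl; auto.
  destruct (in_open r t a) eqn:E; destruct Rle_dec; simpl; try lia.
  apply in_open_spec in E. lra.
Qed.

Lemma top_two_gaps P r t : r <= t ->
  exists lo mid, r <= lo <= mid /\ mid <= t /\ gap P lo mid /\ gap P mid t /\
    (lo = r \/ (count_between r lo P + 2 <= count_between r t P)%nat).
Proof.
  intros Hrt. destruct (Nat.eq_dec (count_between r t P) 0) as [H0|H0].
  { exists r, r. repeat split; try lra; auto using gap_empty, count_between_eq0, Rle_refl. }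
  destruct (count_between_top r t P H0) as [g1 [Hg1 [Hg1rt Hgap1]]].
  destruct (Nat.eq_dec (count_between r g1 P) 0) as [H1|H1].
  { exists r, g1. repeat split; try lra; auto using count_between_eq0. }
  destruct (count_between_top r g1 P H1) as [g2 [Hg2 [Hg2r Hgap2]]].
  exists g2, g1. repeat split; try lra; auto. right.
  pose proof (count_between_lt r g2 g1 P Hg2 Hg2r).
  pose proof (count_between_lt r g1 t P Hg1 Hg1rt). lia.
Qed.

Definition narrow_cell (P : list R) (r t eps z : R) : Prop :=
  exists a b, r <= a <= z /\ z < b <= t /\ b - a <= eps /\
    (a = r \/ In a P) /\ (b = t \/ In b P).

Lemma narrow_cell_width P r t eps z lo hi :
  narrow_cell P r t eps z -> r <= lo -> hi <= t -> gap P lo hi -> lo <= z < hi ->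
  hi - lo <= eps.
Proof.
  intros [a [b [Ha [Hb [Hab [HaP HbP]]]]]] Hlo Hhi Hgap Hz.
  assert (a <= lo).
  { destruct (Rle_lt_dec a lo) as [|Hlt]; auto.
    destruct HaP as [->|HaP]; [lra|]. destruct (Hgap a HaP). lra. }
  assert (hi <= b).
  { destruct (Rle_lt_dec hi b) as [|Hlt]; auto.
    destruct HbP as [->|HbP]; [lra|]. destruct (Hgap b HbP). lra. }
  lra.
Qed.

Section NarrowCells.

Variables (P : list R) (r top eps : R) (A : R -> Prop).
Hypothesis eps_ge0 : 0 <= eps.
Hypothesis A_narrow : forall z, A z -> narrow_cell P r top eps z.

(* Each of the two gaps that meets [A] has width at most [eps]. *)
Lemma coverable_two_gaps lo mid hi :
  r <= lo <= mid -> mid <= hi <= top -> gap P lo mid -> gap P mid hi ->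
  coverable (2 * eps) (fun z => A z /\ lo <= z < hi) 1.
Proof.
  intros Hlo Hhi Hgap1 Hgap2.
  assert (Hleft : exists a, lo <= a <= mid /\ mid - a <= eps /\
                   forall z, A z -> lo <= z < mid -> a <= z).
  { destruct (classic (exists z, A z /\ lo <= z < mid)) as [[z [Hz Hzr]]|Hnone].
    - assert (mid - lo <= eps)
        by (apply (narrow_cell_width P r top eps z); auto; lra).
      exists lo. repeat split; intros; lra.
    - exists mid. repeat split; try lra. intros z Hz Hzr. destruct Hnone. eauto. }
  assert (Hright : exists b, mid <= b <= hi /\ b - mid <= eps /\
                    forall z, A z -> mid <= z < hi -> z <= b).
  { destruct (classic (exists z, A z /\ mid <= z < hi)) as [[z [Hz Hzr]]|Hnone].
    - assert (hi - mid <= eps)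
        by (apply (narrow_cell_width P r top eps z); auto; lra).
      exists hi. repeat split; intros; lra.
    - exists mid. repeat split; try lra. intros z Hz Hzr. destruct Hnone. eauto. }
  destruct Hleft as [a [Ha [Hwa Hza]]]. destruct Hright as [b [Hb [Hwb Hzb]]].
  apply coverable_interval with a b; try lra.
  intros z [Hz Hzr]. destruct (Rlt_le_dec z mid).
  - specialize (Hza z Hz ltac:(lra)). lra.
  - specialize (Hzb z Hz ltac:(lra)). lra.
Qed.

(* Pairing consecutive cells from the top down. *)
Lemma narrow_cells_coverable t : r <= t <= top ->
  exists k, (2 * k <= count_between r t P + 2)%nat /\
    coverable (2 * eps) (fun z => A z /\ r <= z < t) k.
Proof.
  remember (count_between r t P) as n eqn:En. revert t En.
  induction n as [n IH] using lt_wf_ind. intros t En Ht.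
  destruct (top_two_gaps P r t) as [lo [mid [Hlo [Hmid [Hgap1 [Hgap2 Hcase]]]]]]; [lra|].
  pose proof (coverable_two_gaps lo mid t ltac:(lra) ltac:(lra) Hgap1 Hgap2) as Htop.
  destruct Hcase as [->|Hcnt].
  - exists 1%nat. split; [lia|]. exact Htop.
  - destruct (IH (count_between r lo P) ltac:(lia) lo eq_refl ltac:(lra)) as [k [Hk Hcov]].
    exists (k + 1)%nat. split; [lia|].
    apply coverable_subset with (fun z => (A z /\ r <= z < lo) \/ (A z /\ lo <= z < t)).
    + intros z [Hz Hzr]. destruct (Rlt_le_dec z lo); [left|right]; split; auto; lra.
    + apply coverable_union; auto.
Qed.

End NarrowCells.

Lemma max_below (q : list R) r z : r <= z ->
  exists a, r <= a <= z /\ (a = r \/ In a q) /\ forall p, In p q -> r <= p <= z -> p <= a.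
Proof.
  intros Hrz. induction q as [|p0 q IH].
  - exists r. repeat split; auto; try lra. intros p [].
  - destruct IH as [a [Ha [HaP Hmax]]].
    destruct (classic (r <= p0 <= z)) as [Hp0|Hp0].
    + exists (Rmax a p0). split; [split; [pose proof (Rmax_l a p0)|apply Rmax_lub]; lra|].
      split; [apply Rmax_case; [destruct HaP|]; simpl; auto|].
      intros p [<-|Hp] Hpr; [apply Rmax_r|].
      eapply Rle_trans; [apply Hmax; auto|apply Rmax_l].
    + exists a. split; auto. split; [destruct HaP; simpl; auto|].
      intros p [<-|Hp] Hpr; auto. contradiction.
Qed.

Lemma min_above (q : list R) t z : z < t ->
  exists b, z < b <= t /\ (b = t \/ In b q) /\ forall p, In p q -> z < p <= t -> b <= p.
Proof.
  intros Hzt. induction q as [|p0 q IH].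
  - exists t. repeat split; auto; try lra. intros p [].
  - destruct IH as [b [Hb [HbP Hmin]]].
    destruct (classic (z < p0 <= t)) as [Hp0|Hp0].
    + exists (Rmin b p0). split; [split; [apply Rmin_glb_lt|pose proof (Rmin_l b p0)]; lra|].
      split; [apply Rmin_case; [destruct HbP|]; simpl; auto|].
      intros p [<-|Hp] Hpr; [apply Rmin_r|].
      eapply Rle_trans; [apply Rmin_l|apply Hmin; auto].
    + exists b. split; auto. split; [destruct HbP; simpl; auto|].
      intros p [<-|Hp] Hpr; auto. contradiction.
Qed.

Lemma half_open_width a b c d :
  a < b -> (forall x, a <= x < b -> c - d <= x <= c + d) -> b - a <= 2 * d.
Proof.
  intros Hab H. pose proof (H a ltac:(lra)).
  destruct (Rle_lt_dec b (c + d)); [lra|].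
  pose proof (H ((c + d + b) / 2) ltac:(lra)). lra.
Qed.

(* The points of [[a, b)] between consecutive queries answer every query alike,
   so they receive one estimate, which must be [eps / 2]-close to all of them. *)
Lemma info_set_narrow_cell s N eps delta L qs r z :
  in_PhiN N s -> is_private eps delta L N s -> 0 <= r ->
  info_set s N qs z -> r <= z -> narrow_cell qs r 1 eps z.
Proof.
  intros HPhi Hpriv Hr [Hz HQ] Hrz.
  apply Qset_iff in HQ as [y [Hy <-]].
  assert (Hq01 : forall p, In p (queries s N z y) -> 0 <= p < 1).
  { intros p Hp. apply in_map_iff in Hp as [k [<- _]]. apply HPhi. }
  destruct (max_below (queries s N z y) r z Hrz) as [a [Ha [HaP Hamax]]].
  destruct (min_above (queries s N z y) 1 z ltac:(lra)) as [b [Hb [HbP Hbmin]]].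
  exists a, b. repeat split; auto; try lra.
  replace eps with (2 * (eps / 2)) by field.
  apply (half_open_width a b (xhat s N z y)); [lra|].
  intros z' Hz'. rewrite <- (xhat_ext s N y z z').
  - assert (Hacc : Rabs (xhat s N z' y - z') <= eps / 2)
      by (apply (private_accurate s N eps delta L); auto; lra).
    apply Rabs_le_inv in Hacc. lra.
  - intros p Hp. specialize (Hq01 p Hp). destruct (Rle_lt_dec p z).
    + assert (p <= a) by (destruct (Rle_lt_dec r p); [apply Hamax|]; auto; lra).
      rewrite !resp_true; lra.
    + specialize (Hbmin p Hp ltac:(lra)). rewrite !resp_false; lra.
Qed.

(* The information set is covered by [[0, delta]] and by the cells above
   [delta] grouped in pairs. *)
Lemma private_many_high_queries s N eps delta L x y :
  in_PhiN N s -> is_private eps delta L N s -> 0 < eps -> 2 * eps <= delta <= 1 ->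
  0 <= x < 1 -> In y (seq 1 (nseed s)) ->
  (2 * L - 4 <= count_ge delta (queries s N x y))%nat.
Proof.
  intros HPhi Hpriv Heps Hdelta Hx Hy.
  set (qs := queries s N x y).
  set (E := info_set s N qs).
  destruct (narrow_cells_coverable qs delta 1 eps (fun z => E z /\ delta <= z) ltac:(lra))
    with (t := 1) as [k [Hk Hcov]].
  { intros z [Hz Hdz]. apply (info_set_narrow_cell s N eps delta L); auto; lra. }
  { lra. }
  assert (Hcover : coverable delta E (1 + k)).
  { apply coverable_subset
      with (fun z => 0 <= z <= delta \/ ((E z /\ delta <= z) /\ delta <= z < 1)).
    - intros z Hz. destruct (proj1 Hz). destruct (Rle_lt_dec z delta); [left|right]; split;
        try split; auto; lra.
    - apply coverable_union; [apply coverable_interval with 0 delta; auto; lra|].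
      apply coverable_le with (2 * eps); auto; lra. }
  assert (HQ : Qset s N x qs) by (apply Qset_iff; eauto).
  pose proof (proj2 Hpriv x qs Hx HQ _ Hcover).
  pose proof (count_between_le_count_ge delta 1 qs). lia.
Qed.

Lemma has_private_pow_bound_high eps delta L N : 0 < eps -> 2 * eps <= delta <= 1 ->
  has_private eps delta L N -> (2 * L - 4 <= N)%nat /\ delta <= 2 ^ (N - (2 * L - 4)) * eps.
Proof.
  intros Heps Hdelta [s [HPhi Hpriv]].
  assert (Hy : In 1%nat (seq 1 (nseed s))) by (apply in_seq; destruct HPhi; lia).
  assert (Hcount : forall x, 0 <= x < 1 ->
            (2 * L - 4 <= count_ge delta (queries s N x 1))%nat)
    by (intros; apply (private_many_high_queries s N eps delta L); auto).
  split.
  - pose proof (Hcount 0 ltac:(lra)). pose proof (filter_length_le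
      (fun q => if Rle_dec delta q then true else false) (queries s N 0 1)).
    rewrite length_queries in *. unfold count_ge in *. lia.
  - apply (low_queries_bound s N 1 delta _ eps Heps); intros x Hx.
    + apply (private_accurate s N eps delta L); auto. lra.
    + apply Hcount. lra.
Qed.

(** * The private strategy *)

Definition midpoint (ab : R * R) : R := (fst ab + snd ab) / 2.

Definition unit_bracket (ab : R * R) : Prop := 0 <= fst ab < 1 /\ 0 < snd ab <= 1.

Lemma midpoint_unit_bracket lo hi : unit_bracket (lo, hi) ->
  unit_bracket ((lo + hi) / 2, hi) /\ unit_bracket (lo, (lo + hi) / 2) /\
  0 <= (lo + hi) / 2 < 1.
Proof. unfold unit_bracket; simpl; intros; lra. Qed.

Fixpoint bracket (ps : list R) (bs : list bool) (lo hi : R) : R * R :=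
  match ps, bs with
  | p :: ps', b :: bs' =>
    if b then bracket ps' bs' (Rmax lo p) hi else bracket ps' bs' lo (Rmin hi p)
  | _, _ => (lo, hi)
  end.

Lemma bracket_spec ps v : forall lo hi, lo <= v < hi ->
  let ab := bracket ps (map (resp v) ps) lo hi in
  lo <= fst ab <= v /\ v < snd ab <= hi /\
  forall p, In p ps -> (p <= v -> p <= fst ab) /\ (v < p -> snd ab <= p).
Proof.
  induction ps as [|p ps IH]; intros lo hi Hv; simpl.
  - repeat split; try lra; intros p [].
  - destruct (Rle_lt_dec p v) as [Hpv|Hpv];
      [rewrite (resp_true v p Hpv)|rewrite (resp_false v p Hpv)].
    + destruct (IH (Rmax lo p) hi) as [H1 [H2 H3]]; [split; [apply Rmax_lub|]; lra|].
      pose proof (Rmax_l lo p). pose proof (Rmax_r lo p).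
      split; [lra|]. split; [lra|].
      intros q [<-|Hq]; split; intros; try lra; apply (H3 q Hq); auto.
    + destruct (IH lo (Rmin hi p)) as [H1 [H2 H3]]; [split; [|apply Rmin_glb_lt]; lra|].
      pose proof (Rmin_l hi p). pose proof (Rmin_r hi p).
      split; [lra|]. split; [lra|].
      intros q [<-|Hq]; split; intros; try lra; apply (H3 q Hq); auto.
Qed.

Lemma bracket_unit ps : (forall p, In p ps -> 0 < p < 1) ->
  forall bs lo hi, unit_bracket (lo, hi) -> unit_bracket (bracket ps bs lo hi).
Proof.
  intros Hps. induction ps as [|p ps IH]; intros [|b bs] lo hi H; simpl; auto.
  assert (Hp := Hps p (or_introl eq_refl)).
  unfold unit_bracket in *; simpl in *.
  destruct b; apply IH; auto; simpl.
  - pose proof (Rmax_l lo p). split; [split|]; try lra. apply Rmax_lub_lt; lra.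
  - pose proof (Rmin_l hi p). split; [|split]; try lra. apply Rmin_glb_lt; lra.
Qed.

Fixpoint bisect_queries (lo hi v : R) (n : nat) : list R :=
  match n with
  | O => []
  | S n' => let m := (lo + hi) / 2 in
            m :: (if resp v m then bisect_queries m hi v n' else bisect_queries lo m v n')
  end.

Fixpoint bisect_query (lo hi : R) (bs : list bool) : R :=
  match bs with
  | [] => (lo + hi) / 2
  | b :: bs' => let m := (lo + hi) / 2 in
                if b then bisect_query m hi bs' else bisect_query lo m bs'
  end.

Fixpoint bisect (lo hi : R) (bs : list bool) : R * R :=
  match bs with
  | [] => (lo, hi)
  | b :: bs' => let m := (lo + hi) / 2 in if b then bisect m hi bs' else bisect lo m bs'
  end.

Lemma bisect_query_unit bs : forall lo hi,
  unit_bracket (lo, hi) -> 0 <= bisect_query lo hi bs < 1.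
Proof.
  induction bs as [|b bs IH]; intros lo hi H; apply midpoint_unit_bracket in H; simpl.
  - tauto.
  - destruct b; apply IH; tauto.
Qed.

Lemma bisect_unit bs : forall lo hi, unit_bracket (lo, hi) -> unit_bracket (bisect lo hi bs).
Proof.
  induction bs as [|b bs IH]; intros lo hi H; simpl; auto.
  apply midpoint_unit_bracket in H. destruct b; apply IH; tauto.
Qed.

Lemma bisect_queries_unit v n : forall lo hi, unit_bracket (lo, hi) ->
  forall p, In p (bisect_queries lo hi v n) -> 0 <= p < 1.
Proof.
  induction n as [|n IH]; intros lo hi H p Hp; simpl in Hp; [destruct Hp|].
  apply midpoint_unit_bracket in H. destruct Hp as [<-|Hp]; [tauto|].
  destruct resp; eapply IH; eauto; tauto.
Qed.

Lemma length_bisect_queries lo hi v n : length (bisect_queries lo hi v n) = n.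
Proof. revert lo hi. induction n; intros; simpl; auto. destruct resp; rewrite IHn; auto. Qed.

Lemma bisect_queries_between v n : forall lo hi, lo < hi ->
  forall p, In p (bisect_queries lo hi v n) -> lo < p < hi.
Proof.
  induction n as [|n IH]; intros lo hi H p Hp; simpl in Hp; [destruct Hp|].
  destruct Hp as [<-|Hp]; [lra|].
  destruct resp; apply IH in Hp; lra.
Qed.

Lemma NoDup_bisect_queries v n : forall lo hi, lo < hi -> NoDup (bisect_queries lo hi v n).
Proof.
  induction n as [|n IH]; intros lo hi H; simpl; constructor.
  - destruct resp; intro Hin; apply bisect_queries_between in Hin; lra.
  - destruct resp; apply IH; lra.
Qed.

Lemma bisect_queries_ext u v n : forall lo hi,
  (forall p, In p (bisect_queries lo hi v n) -> resp u p = resp v p) ->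
  bisect_queries lo hi u n = bisect_queries lo hi v n.
Proof.
  induction n as [|n IH]; intros lo hi H; simpl; auto.
  rewrite (H ((lo + hi) / 2) (or_introl eq_refl)). f_equal.
  destruct (resp v ((lo + hi) / 2)) eqn:E; apply IH; intros p Hp; apply H; right;
    simpl; rewrite E; auto.
Qed.

Lemma bisect_spec v n : forall lo hi, lo <= v < hi ->
  let ab := bisect lo hi (map (resp v) (bisect_queries lo hi v n)) in
  lo <= fst ab <= v /\ v < snd ab <= hi /\ snd ab - fst ab = (hi - lo) / 2 ^ n /\
  forall p, In p (bisect_queries lo hi v n) ->
    (p <= v -> p <= fst ab) /\ (v < p -> snd ab <= p).
Proof.
  induction n as [|n IH]; intros lo hi Hv; simpl.
  - repeat split; try lra; intros p [].
  - assert (H2n : 2 ^ n <> 0) by (pose proof (pow_lt 2 n); lra).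
    destruct (Rle_lt_dec ((lo + hi) / 2) v) as [Hm|Hm];
      [rewrite (resp_true v _ Hm)|rewrite (resp_false v _ Hm)]; simpl.
    + destruct (IH ((lo + hi) / 2) hi ltac:(lra)) as [H1 [H2 [H3 H4]]].
      split; [lra|]. split; [lra|]. split; [rewrite H3; field; auto|].
      intros q [<-|Hq]; split; intros; try lra; apply (H4 q Hq); auto.
    + destruct (IH lo ((lo + hi) / 2) ltac:(lra)) as [H1 [H2 [H3 H4]]].
      split; [lra|]. split; [lra|]. split; [rewrite H3; field; auto|].
      intros q [<-|Hq]; split; intros; try lra; apply (H4 q Hq); auto.
Qed.

Lemma bisect_query_nth v n : forall lo hi j, (j < n)%nat ->
  bisect_query lo hi (map (resp v) (firstn j (bisect_queries lo hi v n))) =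
  nth j (bisect_queries lo hi v n) 0.
Proof.
  induction n as [|n IH]; intros lo hi j Hj; [lia|].
  destruct j as [|j]; simpl; auto.
  destruct resp; apply IH; lia.
Qed.

Definition grid (L : nat) : list R := map (fun k => INR (S k) / INR L) (seq 0 (L - 1)).
Definition anchors (L : nat) (e : R) : list R := map (fun k => INR k / INR L + e) (seq 0 L).
Definition phase1 (L : nat) (e : R) : list R := grid L ++ anchors L e.
Definition cell (L : nat) (e v : R) : R * R :=
  bracket (phase1 L e) (map (resp v) (phase1 L e)) 0 1.
Definition narrow (e : R) (ab : R * R) : bool :=
  if Rle_dec (snd ab - fst ab) e then true else false.

(* One point in each narrow cell [[k / L, k / L + e)], pairwise more than [1 / L] apart. *)
Definition anchor_point (L : nat) (e : R) (k : nat) : R := INR k * (1 + e / 2) / INR L.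

Definition decoy (M y : nat) : R := INR (y - 1) / INR M.

Definition cell_queries (L : nat) (e : R) (T : nat) (v : R) : list R :=
  bisect_queries (fst (cell L e v)) (snd (cell L e v)) v T.

(* After the [2 L - 1] fixed queries, a wide cell is bisected [T] times; in a
   narrow cell, whose midpoint is already accurate, the strategy asks instead
   the bisection queries of the decoy value chosen by the seed. *)
Definition private_strategy (L : nat) (e : R) (T M : nat) : strategy :=
  let nF := length (phase1 L e) in
  Strategy M
    (fun rs y =>
       if lt_dec (length rs) nF then nth (length rs) (phase1 L e) 0 else
       let ab := bracket (phase1 L e) (firstn nF rs) 0 1 in
       if narrow e ab then nth (length rs - nF) (cell_queries L e T (decoy M y)) 0
       else bisect_query (fst ab) (snd ab) (skipn nF rs))
    (fun rs y =>
       let ab := bracket (phase1 L e) (firstn nF rs) 0 1 in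
       if narrow e ab then midpoint ab
       else midpoint (bisect (fst ab) (snd ab) (skipn nF rs))).

Definition phase2 (L : nat) (e : R) (T M : nat) (x : R) (y : nat) : list R :=
  if narrow e (cell L e x) then cell_queries L e T (decoy M y) else cell_queries L e T x.

Lemma midpoint_unit ab : unit_bracket ab -> 0 <= midpoint ab < 1.
Proof. unfold unit_bracket, midpoint. lra. Qed.

Lemma nth_unit (l : list R) k : (forall p, In p l -> 0 <= p < 1) -> 0 <= nth k l 0 < 1.
Proof.
  intros H. destruct (lt_dec k (length l)); [apply H, nth_In; auto|].
  rewrite nth_overflow by lia. lra.
Qed.

Lemma narrow_true e ab : narrow e ab = true -> snd ab - fst ab <= e.
Proof. unfold narrow. destruct Rle_dec; auto; discriminate. Qed.

Lemma narrow_false e ab : narrow e ab = false -> e < snd ab - fst ab.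
Proof. unfold narrow. destruct Rle_dec; [discriminate|lra]. Qed.

Section Construction.

Variables (L : nat) (e : R) (T M : nat).
Hypotheses (L_ge2 : (2 <= L)%nat) (e_pos : 0 < e) (e_small : 2 * e < 1 / INR L).

Let INR_L_ge2 : 2 <= INR L.
Proof. replace 2 with (INR 2) by (simpl; lra). apply le_INR. auto. Qed.

Let e_L_lt_half : e * INR L < 1 / 2.
Proof.
  apply (Rmult_lt_compat_r (INR L)) in e_small; [|lra].
  replace (1 / INR L * INR L) with 1 in e_small by (field; lra). lra.
Qed.

Lemma length_phase1 : length (phase1 L e) = (2 * L - 1)%nat.
Proof. unfold phase1, grid, anchors. rewrite length_app, !length_map, !length_seq. lia. Qed.

Lemma grid_in j : (1 <= j < L)%nat -> In (INR j / INR L) (phase1 L e).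
Proof.
  intros Hj. apply in_or_app. left. apply in_map_iff.
  exists (j - 1)%nat. split; [do 2 f_equal; lia|apply in_seq; lia].
Qed.

Lemma anchor_in k : (k < L)%nat -> In (INR k / INR L + e) (phase1 L e).
Proof.
  intros Hk. apply in_or_app. right. apply in_map_iff.
  exists k. split; auto. apply in_seq. lia.
Qed.

Lemma frac_bounds k : (k < L)%nat -> 0 <= INR k / INR L /\ INR k / INR L + 1 / INR L <= 1.
Proof.
  intros Hk. pose proof (INR_succ_le _ _ Hk). pose proof (pos_INR k).
  split; [apply Rdiv_le_0_compat; lra|].
  replace (INR k / INR L + 1 / INR L) with ((INR k + 1) / INR L) by (field; lra).
  apply (Rmult_le_reg_r (INR L)); [lra|]. unfold Rdiv. rewrite Rmult_assoc, Rinv_l; lra.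
Qed.

Lemma phase1_unit p : In p (phase1 L e) -> 0 < p < 1.
Proof.
  intros Hp. apply in_app_or in Hp as [Hp|Hp]; apply in_map_iff in Hp as [k [<- Hk]];
    apply in_seq in Hk.
  - destruct (frac_bounds (S k) ltac:(lia)). pose proof (lt_0_INR (S k) ltac:(lia)).
    split; [apply Rdiv_lt_0_compat|]; lra.
  - destruct (frac_bounds k ltac:(lia)). lra.
Qed.

Lemma phase1_bracket_unit bs : unit_bracket (bracket (phase1 L e) bs 0 1).
Proof. apply bracket_unit; [exact phase1_unit|]. unfold unit_bracket; simpl; lra. Qed.

Lemma NoDup_phase1 : NoDup (phase1 L e).
Proof.
  assert (HL : 0 < / INR L) by (apply Rinv_0_lt_compat; lra).
  apply NoDup_app.
  - apply NoDup_map_NoDup_ForallPairs; [|apply seq_NoDup].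
    intros a b _ _ H. apply eq_add_S, INR_eq.
    apply (Rmult_eq_reg_r (/ INR L)); [exact H|lra].
  - apply NoDup_map_NoDup_ForallPairs; [|apply seq_NoDup].
    intros a b _ _ H. apply INR_eq. apply (Rmult_eq_reg_r (/ INR L)); [|lra].
    unfold Rdiv in H. lra.
  - intros p Hp1 Hp2. apply in_map_iff in Hp1 as [a [<- _]].
    apply in_map_iff in Hp2 as [b [Hb _]].
    assert (Hab : INR (S a) = INR b + e * INR L).
    { apply (Rmult_eq_reg_r (/ INR L)); [|lra].
      rewrite Rmult_plus_distr_r, (Rmult_assoc e), Rinv_r, Rmult_1_r by lra.
      unfold Rdiv in Hb. lra. }
    assert (0 < e * INR L) by nra.
    destruct (Nat.lt_ge_cases b (S a)) as [Hlt|Hge];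
      [apply INR_succ_le in Hlt|apply le_INR in Hge]; lra.
Qed.

Lemma cell_spec v : 0 <= v < 1 ->
  0 <= fst (cell L e v) <= v /\ v < snd (cell L e v) <= 1 /\
  forall p, In p (phase1 L e) ->
    (p <= v -> p <= fst (cell L e v)) /\ (v < p -> snd (cell L e v) <= p).
Proof. apply bracket_spec. Qed.

Lemma cell_width v : 0 <= v < 1 -> snd (cell L e v) - fst (cell L e v) <= 1 / INR L.
Proof.
  intros Hv. destruct (cell_spec v Hv) as [H1 [H2 H3]].
  destruct (nat_floor_ex L (v * INR L)) as [j [Hj Hvj]]; [split; nra|].
  destruct (frac_bounds j Hj) as [Hj0 Hj1].
  assert (Hlo : INR j / INR L <= fst (cell L e v)).
  { destruct j as [|j]; [simpl; unfold Rdiv; rewrite Rmult_0_l; lra|].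
    apply (H3 _ (grid_in (S j) ltac:(lia))).
    apply (Rmult_le_reg_r (INR L)); [lra|]. unfold Rdiv. rewrite Rmult_assoc, Rinv_l; lra. }
  assert (Hhi : snd (cell L e v) <= INR j / INR L + 1 / INR L).
  { replace (INR j / INR L + 1 / INR L) with (INR (S j) / INR L) by (rewrite S_INR; field; lra).
    destruct (Nat.eq_dec (S j) L) as [E|E]; [rewrite E, Rdiv_diag; lra|].
    apply (H3 _ (grid_in (S j) ltac:(lia))).
    rewrite S_INR. apply (Rmult_lt_reg_r (INR L)); [lra|].
    unfold Rdiv. rewrite Rmult_assoc, Rinv_l; lra. }
  lra.
Qed.

Lemma anchor_point_narrow k : (k < L)%nat ->
  0 <= anchor_point L e k < 1 /\ narrow e (cell L e (anchor_point L e k)) = true.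
Proof.
  intros Hk. destruct (frac_bounds k Hk) as [Hk0 Hk1].
  assert (Hsplit : anchor_point L e k = INR k / INR L + INR k * e / (2 * INR L))
    by (unfold anchor_point; field; lra).
  assert (Hoff : 0 <= INR k * e / (2 * INR L) < e).
  { pose proof (INR_succ_le _ _ Hk). pose proof (pos_INR k).
    split; [apply Rdiv_le_0_compat; nra|].
    apply (Rmult_lt_reg_r (2 * INR L)); [lra|]. unfold Rdiv.
    rewrite Rmult_assoc, Rinv_l by lra. nra. }
  assert (Hv : 0 <= anchor_point L e k < 1) by lra.
  split; auto.
  destruct (cell_spec _ Hv) as [H1 [H2 H3]].
  assert (INR k / INR L <= fst (cell L e (anchor_point L e k))).
  { destruct k as [|k]; [simpl; unfold Rdiv; rewrite Rmult_0_l; lra|].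
    apply (H3 _ (grid_in (S k) ltac:(lia))). lra. }
  assert (snd (cell L e (anchor_point L e k)) <= INR k / INR L + e)
    by (apply (H3 _ (anchor_in k Hk)); lra).
  unfold narrow. destruct Rle_dec; auto. lra.
Qed.

Lemma anchor_point_sep i j :
  i <> j -> 1 / INR L < Rabs (anchor_point L e i - anchor_point L e j).
Proof.
  intros Hij. unfold anchor_point.
  replace (INR i * (1 + e / 2) / INR L - INR j * (1 + e / 2) / INR L)
    with ((INR i - INR j) * ((1 + e / 2) / INR L)) by (field; lra).
  rewrite Rabs_mult, (Rabs_right ((1 + e / 2) / INR L))
    by (apply Rle_ge, Rdiv_le_0_compat; lra).
  assert (1 <= Rabs (INR i - INR j)).
  { destruct (Nat.lt_ge_cases i j) as [H|H].
    - apply INR_succ_le in H. rewrite Rabs_left; lra.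
    - assert (j < i)%nat as H' by lia. apply INR_succ_le in H'. rewrite Rabs_right; lra. }
  assert (1 / INR L < (1 + e / 2) / INR L) by (apply Rdiv_lt_compat_r; lra).
  assert (0 < (1 + e / 2) / INR L) by (apply Rdiv_lt_0_compat; lra).
  nra.
Qed.

Let nF := length (phase1 L e).
Let phi := private_strategy L e T M.

Lemma length_phase2 x y : length (phase2 L e T M x y) = T.
Proof. unfold phase2, cell_queries. destruct narrow; apply length_bisect_queries. Qed.

Lemma private_strategy_query x y k : (k < nF + T)%nat ->
  query phi (map (resp x) (firstn k (phase1 L e ++ phase2 L e T M x y))) y =
  nth k (phase1 L e ++ phase2 L e T M x y) 0.
Proof.
  intros Hk. simpl. fold nF.
  rewrite length_map, length_firstn, length_app, length_phase2, Nat.min_l by lia.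
  destruct (lt_dec k nF) as [Hlt|Hge]; [rewrite app_nth1; auto|].
  rewrite app_nth2 by lia. fold nF.
  rewrite firstn_app_ge, map_app by lia. fold nF.
  replace nF with (length (map (resp x) (phase1 L e))) by apply length_map.
  rewrite firstn_app_length, skipn_app_length. fold (cell L e x).
  unfold phase2. destruct (narrow e (cell L e x)); [rewrite length_map; auto|].
  apply bisect_query_nth. rewrite length_map. fold nF. lia.
Qed.

Lemma private_strategy_responses x y k : (k <= nF + T)%nat ->
  responses phi x y k = map (resp x) (firstn k (phase1 L e ++ phase2 L e T M x y)).
Proof.
  induction k as [|k IH]; intros Hk; [reflexivity|]. cbn [responses].
  rewrite IH, private_strategy_query by lia.
  rewrite (firstn_succ_snoc _ k 0) by (rewrite length_app, length_phase2; fold nF; lia).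
  apply eq_sym, map_app.
Qed.

Lemma private_strategy_queries x y :
  queries phi (nF + T) x y = phase1 L e ++ phase2 L e T M x y.
Proof.
  unfold queries.
  replace (nF + T)%nat with (length (phase1 L e ++ phase2 L e T M x y))
    by (rewrite length_app, length_phase2; auto).
  apply map_seq_nth with (d := 0). intros k Hk. rewrite length_app, length_phase2 in Hk.
  rewrite private_strategy_responses by (fold nF in Hk; lia).
  apply private_strategy_query. fold nF in Hk. lia.
Qed.

Lemma private_strategy_xhat x y :
  xhat phi (nF + T) x y =
  if narrow e (cell L e x) then midpoint (cell L e x)
  else midpoint (bisect (fst (cell L e x)) (snd (cell L e x))
                        (map (resp x) (phase2 L e T M x y))).
Proof.
  unfold xhat. rewrite private_strategy_responses by lia.
  rewrite firstn_all2 by (rewrite length_app, length_phase2; fold nF; lia).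
  simpl. fold nF. rewrite map_app.
  replace nF with (length (map (resp x) (phase1 L e))) by apply length_map.
  rewrite firstn_app_length, skipn_app_length. reflexivity.
Qed.

Lemma cell_queries_unit v p : In p (cell_queries L e T v) -> 0 <= p < 1.
Proof.
  apply bisect_queries_unit. destruct (cell L e v) eqn:E. rewrite <- E.
  apply phase1_bracket_unit.
Qed.

Lemma cell_queries_between v p : 0 <= v < 1 ->
  In p (cell_queries L e T v) -> fst (cell L e v) < p < snd (cell L e v).
Proof.
  intros Hv. destruct (cell_spec v Hv) as [H1 [H2 _]].
  apply bisect_queries_between. lra.
Qed.

Lemma NoDup_private_queries v : 0 <= v < 1 -> NoDup (phase1 L e ++ cell_queries L e T v).
Proof.
  intros Hv. destruct (cell_spec v Hv) as [H1 [H2 H3]].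
  apply NoDup_app; [apply NoDup_phase1|apply NoDup_bisect_queries; lra|].
  intros p Hp Hp2. apply cell_queries_between in Hp2; auto.
  destruct (H3 p Hp). destruct (Rle_lt_dec p v); [specialize (H r)|specialize (H0 r)]; lra.
Qed.

Lemma decoy_unit y : (1 <= y <= M)%nat -> 0 <= decoy M y < 1.
Proof.
  intros Hy. unfold decoy. pose proof (INR_succ_le (y - 1) M ltac:(lia)).
  pose proof (pos_INR (y - 1)).
  split; [apply Rdiv_le_0_compat; lra|].
  apply (Rmult_lt_reg_r (INR M)); [lra|]. unfold Rdiv. rewrite Rmult_assoc, Rinv_l; lra.
Qed.

Lemma private_strategy_in_PhiN : (1 <= M)%nat -> in_PhiN (nF + T) phi.
Proof.
  intros HM. split; [exact HM|]. split; [|split].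
  - intros rs y. simpl. destruct lt_dec.
    + apply nth_unit. intros p Hp. pose proof (phase1_unit p Hp). lra.
    + destruct narrow; [apply nth_unit, cell_queries_unit|].
      apply bisect_query_unit.
      destruct (bracket _ _ _ _) as [lo hi] eqn:E. rewrite <- E. apply phase1_bracket_unit.
  - intros rs y. simpl. pose proof (phase1_bracket_unit (firstn nF rs)) as Hu.
    destruct (bracket _ _ _ _) as [lo hi]. destruct narrow; apply midpoint_unit; auto.
    apply bisect_unit. auto.
  - intros x y Hx Hy. rewrite private_strategy_queries. unfold phase2.
    destruct narrow; apply NoDup_private_queries; auto. apply decoy_unit. exact Hy.
Qed.

Hypothesis T_large : 1 / INR L <= 2 ^ T * e.

Lemma private_strategy_accurate x y : 0 <= x < 1 ->
  Rabs (xhat phi (nF + T) x y - x) <= e / 2.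
Proof.
  intros Hx. rewrite private_strategy_xhat. destruct (cell_spec x Hx) as [H1 [H2 _]].
  unfold phase2. destruct (narrow e (cell L e x)) eqn:En.
  - apply narrow_true in En. apply Rabs_le. unfold midpoint. lra.
  - unfold cell_queries.
    destruct (bisect_spec x T (fst (cell L e x)) (snd (cell L e x)))
      as [K1 [K2 [K3 _]]]; [lra|].
    pose proof (cell_width x Hx) as Hw.
    assert (H2T : 0 < 2 ^ T) by (apply pow_lt; lra).
    assert (Hfin : (snd (cell L e x) - fst (cell L e x)) / 2 ^ T <= e).
    { apply (Rmult_le_reg_r (2 ^ T)); auto. unfold Rdiv.
      rewrite Rmult_assoc, Rinv_l; lra. }
    apply Rabs_le. unfold midpoint. lra.
Qed.

Lemma cell_eq u x : 0 <= x < 1 -> fst (cell L e x) <= u < snd (cell L e x) ->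
  cell L e u = cell L e x.
Proof.
  intros Hx Hu. destruct (cell_spec x Hx) as [_ [_ H3]].
  unfold cell. f_equal. apply map_ext_in. intros p Hp. destruct (H3 p Hp).
  destruct (Rle_lt_dec p x); [rewrite !resp_true|rewrite !resp_false]; auto.
  - specialize (H r). lra.
  - specialize (H0 r). lra.
Qed.

Hypothesis M_large : 2 ^ T < INR M * e.

(* A wide cell is bisected down to width more than [1 / M], so some decoy
   [j / M] follows the same bisection path as [x]. *)
Lemma phase2_decoy x y : 0 <= x < 1 -> (1 <= y <= M)%nat ->
  exists y', (1 <= y' <= M)%nat /\ phase2 L e T M x y = cell_queries L e T (decoy M y').
Proof.
  intros Hx Hy. unfold phase2. destruct (narrow e (cell L e x)) eqn:En; [eauto|].
  apply narrow_false in En. destruct (cell_spec x Hx) as [H1 [H2 _]].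
  unfold cell_queries.
  set (lo := fst (cell L e x)) in *. set (hi := snd (cell L e x)) in *.
  destruct (bisect_spec x T lo hi ltac:(lra)) as [K1 [K2 [K3 K4]]].
  set (ab := bisect lo hi _) in *.
  assert (H2T : 0 < 2 ^ T) by (apply pow_lt; lra).
  assert (HM : (0 < M)%nat) by (destruct M; [simpl in M_large; lra|lia]).
  assert (Hab : 1 / INR M < snd ab - fst ab).
  { rewrite K3. apply Rlt_le_trans with (e / 2 ^ T); [|apply Rdiv_le_compat_r; lra].
    apply lt_0_INR in HM.
    apply (Rmult_lt_reg_r (INR M * 2 ^ T)); [nra|]. unfold Rdiv.
    replace (1 * / INR M * (INR M * 2 ^ T)) with (2 ^ T) by (field; lra).
    replace (e * / 2 ^ T * (INR M * 2 ^ T)) with (INR M * e) by (field; lra). lra. }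
  destruct (grid_point M (fst ab) (snd ab) HM ltac:(lra) ltac:(lra) Hab) as [j [Hj Hu]].
  exists (S j). split; [lia|].
  unfold decoy. replace (S j - 1)%nat with j by lia.
  rewrite (cell_eq (INR j / INR M) x Hx ltac:(unfold lo, hi in *; lra)). fold lo hi.
  symmetry. apply bisect_queries_ext. intros p Hp. destruct (K4 p Hp).
  destruct (Rle_lt_dec p x); [rewrite !resp_true|rewrite !resp_false]; auto.
  - specialize (H r). lra.
  - specialize (H0 r). lra.
Qed.

(* Every run is also a run of each anchor point, with the seed of a decoy. *)
Lemma private_strategy_cover_ge x qs : 0 <= x < 1 -> Qset phi (nF + T) x qs ->
  cover_ge (1 / INR L) (info_set phi (nF + T) qs) L.
Proof.
  intros Hx HQ. apply Qset_iff in HQ as [y [Hy <-]]. simpl in Hy. apply in_seq in Hy.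
  destruct (phase2_decoy x y Hx ltac:(lia)) as [y' [Hy' Hq]].
  apply (separated_cover_ge _ _ (anchor_point L e)); [apply anchor_point_sep|].
  intros k Hk. destruct (anchor_point_narrow k Hk) as [Hz Hnarrow].
  split; auto. apply Qset_iff. exists y'. split; [simpl; apply in_seq; lia|].
  rewrite !private_strategy_queries, Hq. unfold phase2. rewrite Hnarrow. reflexivity.
Qed.

End Construction.

Lemma has_private_upper_bound L eps T : (2 <= L)%nat -> 0 < eps -> 2 * eps < 1 / INR L ->
  1 / INR L <= 2 ^ T * eps -> has_private eps (1 / INR L) L (2 * L - 1 + T).
Proof.
  intros HL Heps Hsmall HT.
  destruct (INR_archimed eps (2 ^ T) Heps) as [M HM].
  assert (HM1 : (1 <= M)%nat) by (destruct M; [simpl in HM; pose proof (pow_lt 2 T); lra|lia]).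
  exists (private_strategy L eps T M). rewrite <- (length_phase1 L eps) by auto.
  split; [apply private_strategy_in_PhiN; auto|]. split.
  - intros x Hx. apply unif_prob_eq1_iff; [exact HM1|]. intros y _.
    destruct Rle_dec as [|Hfalse]; auto.
    exfalso. apply Hfalse, private_strategy_accurate; auto.
  - intros x qs Hx HQ. apply (private_strategy_cover_ge L eps T M) with x; auto.
Qed.

Lemma is_Nstar_le eps delta L N : has_private eps delta L N ->
  exists n, is_Nstar eps delta L n /\ (n <= N)%nat.
Proof.
  intros H. destruct (least_nat _ (ex_intro _ N H)) as [n [Hn Hmin]].
  exists n. split; [split|]; auto.
Qed.

Theorem corollary1 (eps : R) (L : nat) :
  0 < eps -> (2 <= L)%nat -> 2 * eps < 1 / INR L ->
  ((L = 2%nat ->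
    exists n, is_Nstar eps (1 / INR L) L n /\
      (Rceil (log2 (1 / eps)) <= Z.of_nat n <= Rceil (log2 (1 / eps)) + 4)%Z) /\
   ((3 <= L)%nat ->
    exists n, is_Nstar eps (1 / INR L) L n /\
      (Rceil (log2 (1 / (INR L * eps))) + 2 * Z.of_nat L - 4 <= Z.of_nat n <=
       Rceil (log2 (1 / (INR L * eps))) + 2 * Z.of_nat L)%Z)).
Proof.
  intros Heps HL Hsmall.
  assert (HL2 : 2 <= INR L) by (replace 2 with (INR 2) by (simpl; lra); apply le_INR; auto).
  assert (HLr : 0 < 1 / INR L <= 1 / 2)
    by (split; [apply Rdiv_lt_0_compat|apply Rmult_le_compat_l, Rinv_le_contravar]; lra).
  replace (1 / (INR L * eps)) with ((1 / INR L) / eps) by (field; lra).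
  destruct (Rceil_log2_ratio_spec (1 / INR L) eps) as [Hc0 HT]; [auto|lra|].
  set (c := Rceil (log2 (1 / INR L / eps))) in *.
  destruct (is_Nstar_le _ _ _ _ (has_private_upper_bound L eps _ HL Heps Hsmall HT))
    as [n [Hn Hupper]].
  pose proof (Z2Nat.id c Hc0). pose proof (proj1 Hn) as Hpriv.
  split; intros HL'; exists n; split; auto.
  - subst L. assert (c <= Rceil (log2 (1 / eps)))%Z.
    { apply Rceil_le_compat, log2_le_compat; [apply Rdiv_lt_0_compat; lra|].
      apply Rmult_le_compat_r; [left; apply Rinv_0_lt_compat|]; lra. }
    pose proof (Rceil_log2_ratio_le 1 eps n ltac:(lra) Heps
                  (has_private_pow_bound _ _ _ _ Heps Hpriv)).
    lia.
  - destruct (has_private_pow_bound_high eps (1 / INR L) L n Heps ltac:(lra) Hpriv)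
      as [HW Hpow].
    pose proof (Rceil_log2_ratio_le (1 / INR L) eps _ ltac:(lra) Heps Hpow).
    lia.
Qed.
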